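(* Let $G$ be a supergraceful graph with $p$ nodes and $q$ edges having a node $u$ of degree $p-1$, and suppose $G$ has a total labeling $\varphi$ with $\varphi(u) = p+q$. Then there exists a total labeling $\mu$ of $G$ such that $1 \in N(\mu)$.
   Context: Graphs are finite, simple. For a labeling $\varphi: V(G) \to \mathbb{Z}_{>0}$ let $N(\varphi) = \{\varphi(x) : x \in V(G)\}$ and $E(\varphi) = \{|\varphi(x)-\varphi(y)| : xy \in E(G)\}$. A total labeling of a graph $G$ with $p$ nodes and $q$ edges is a map $\varphi$ such that the $p$ node labels and the $q$ edge labels are pairwise distinct and $N(\varphi) \cup E(\varphi) = \{1,\dots,p+q\}$; $G$ is supergraceful if it admits a total labeling. *)

From mathcomp Require Import all_boot.
Set Implicit Arguments. Unset Strict Implicit. Unset Printing Implicit Defensive.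

Definition simple_graph (T : finType) (e : rel T) : Prop :=
  irreflexive e /\ symmetric e.

Definition edges (T : finType) (e : rel T) : {set {set T}} :=
  [set [set x; y] | x in T, y in T & e x y].

Definition absdiff (m n : nat) : nat := (m - n) + (n - m).

(* Total labeling phi of G (p = #|T| nodes, q = #|edges e| edges):
   positive node labels; node labels pairwise distinct; edge labels
   |phi x - phi y| pairwise distinct (distinct edges get distinct labels);
   no node label equals an edge label; and N(phi) ∪ E(phi) = {1,...,p+q}. *)
Definition total_labeling (T : finType) (e : rel T) (phi : T -> nat) : Prop :=
  [/\ (forall x, 0 < phi x),
      injective phi,
      (forall x y x' y', e x y -> e x' y' ->
          absdiff (phi x) (phi y) = absdiff (phi x') (phi y') ->
          [set x; y] = [set x'; y']),
      (forall z x y, e x y -> phi z <> absdiff (phi x) (phi y))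
    & (forall k, (1 <= k <= #|T| + #|edges e|) <->
          ((exists z, phi z = k) \/
           (exists x y, e x y /\ absdiff (phi x) (phi y) = k)))].

Definition supergraceful (T : finType) (e : rel T) : Prop :=
  exists phi, total_labeling e phi.

From mathcomp Require Import all_boot.
From mathcomp Require Import zify.

Set Implicit Arguments.
Unset Strict Implicit.
Unset Printing Implicit Defensive.

(* If [phi u = p + q] and [u] is adjacent to every other node, relabel [u] by
   [p + q] and every other node [x] by [p + q - phi x].  The edge [ux] then
   carries the old node label [phi x], the node [x] carries the old label
   [p + q - phi x] of the edge [ux], and edges avoiding [u] keep their labels:
   the new labeling is again total.  Unless [1] is already a node label, the
   label [p + q - 1] is a node label [phi v] (as an edge label it would need
   the node labels [1] and [p + q]), and then [v] gets the new label [1]. *)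

Lemma absdiffC m n : absdiff m n = absdiff n m.
Proof. by rewrite /absdiff addnC. Qed.

Lemma adjacent_all_of_card (T : finType) (e : rel T) (u : T) :
  irreflexive e -> #|[set v | e u v]| = #|T| - 1 -> forall v, v != u -> e u v.
Proof.
move=> e_irr deg_u v vu.
have sub : [set v | e u v] \subset [set~ u].
  by apply/subsetP => w; rewrite !inE; apply: contraTneq => ->; rewrite e_irr.
have /setP/(_ v) : [set v | e u v] = [set~ u].
  by apply/eqP; rewrite eqEcard sub cardsC1 deg_u subn1 leqnn.
by rewrite !inE vu.
Qed.

Section TotalLabeling.

Variables (T : finType) (e : rel T).
Local Notation M := (#|T| + #|edges e|).

Definition is_label (f : T -> nat) (k : nat) : Prop :=
  (exists z, f z = k) \/ (exists x y, e x y /\ absdiff (f x) (f y) = k).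

Variable phi : T -> nat.
Hypothesis phiL : total_labeling e phi.

Lemma is_labelP k : 1 <= k <= M <-> is_label phi k.
Proof. by case: phiL. Qed.

Lemma node_label_le x : phi x <= M.
Proof. by have /is_labelP/andP[] : is_label phi (phi x) by left; exists x. Qed.

Lemma absdiff_label_lt x y : absdiff (phi x) (phi y) < M.
Proof.
have [pos _ _ _ _] := phiL.
have := pos x; have := pos y; have := node_label_le x; have := node_label_le y.
rewrite /absdiff; lia.
Qed.

Lemma pred_top_node_label (x0 : T) :
  (forall z, phi z != 1) -> exists v, phi v = M.-1.
Proof.
have [pos _ _ _ _] := phiL => no1.
have M2 : 2 <= M by have := pos x0; have := no1 x0; have := node_label_le x0; lia.
have /is_labelP[[v <-]|[x [y [_ dxy]]]] : 1 <= M.-1 <= M by lia.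
  by exists v.
have := pos x; have := pos y; have := no1 x; have := no1 y.
have := node_label_le x; have := node_label_le y.
by move: dxy; rewrite /absdiff; lia.
Qed.

Variable u : T.
Hypothesis e_irr : irreflexive e.

Lemma edge_at_or_away (f : T -> nat) x y : e x y ->
  (exists2 w, w != u & [set x; y] = [set u; w] /\
                       absdiff (f x) (f y) = absdiff (f u) (f w))
  \/ (x != u /\ y != u).
Proof.
move=> exy; case: (eqVneq x u) => [xu|xu]; last case: (eqVneq y u) => [yu|yu].
- have yu : y != u by apply: contraTneq exy => ->; rewrite xu e_irr.
  by left; exists y; rewrite ?xu.
- by left; exists x; rewrite // yu setUC absdiffC.
- by right.
Qed.

Hypothesis phi_u : phi u = M.

Lemma node_label_lt x : x != u -> phi x < M.
Proof.
have [_ inj _ _ _] := phiL => xu; rewrite ltn_neqAle node_label_le andbT -phi_u.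
by apply: contra xu => /eqP/inj ->.
Qed.

Definition complement_labeling (x : T) : nat :=
  if x == u then M else M - phi x.

Local Notation mu := complement_labeling.

Lemma complement_labeling_at : mu u = M.
Proof. by rewrite /complement_labeling eqxx. Qed.

Lemma complement_labeling_away x : x != u -> mu x = M - phi x.
Proof. by rewrite /complement_labeling => /negbTE ->. Qed.

Lemma absdiff_complement_at w : w != u -> absdiff (mu u) (mu w) = phi w.
Proof.
move=> wu; rewrite complement_labeling_at complement_labeling_away // /absdiff.
by have := node_label_lt wu; lia.
Qed.

Lemma absdiff_label_at w : w != u -> absdiff (phi u) (phi w) = mu w.
Proof.
move=> wu; rewrite complement_labeling_away // phi_u /absdiff.
by have := node_label_lt wu; lia.
Qed.

Lemma absdiff_complement_away x y : x != u -> y != u ->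
  absdiff (mu x) (mu y) = absdiff (phi x) (phi y).
Proof.
move=> xu yu; rewrite !complement_labeling_away // /absdiff.
by have := node_label_lt xu; have := node_label_lt yu; lia.
Qed.

Hypothesis hub : forall v, v != u -> e u v.

Lemma is_label_complement k : is_label mu k <-> is_label phi k.
Proof.
split=> [[[z <-]|[x [y [exy <-]]]]|[[z <-]|[x [y [exy <-]]]]].
- case: (eqVneq z u) => [->|zu]; first by left; exists u; rewrite complement_labeling_at.
  by right; exists u, z; rewrite absdiff_label_at // hub.
- have [[w wu [_ ->]]|[xu yu]] := edge_at_or_away mu exy.
    by left; exists w; rewrite absdiff_complement_at.
  by right; exists x, y; rewrite absdiff_complement_away.
- case: (eqVneq z u) => [->|zu]; first by left; exists u; rewrite complement_labeling_at.
  by right; exists u, z; rewrite absdiff_complement_at // hub.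
- have [[w wu [_ ->]]|[xu yu]] := edge_at_or_away phi exy.
    by left; exists w; rewrite absdiff_label_at.
  by right; exists x, y; rewrite absdiff_complement_away.
Qed.

Lemma complement_labeling_pos x : 0 < mu x.
Proof.
case: (eqVneq x u) => [->|xu]; first by rewrite complement_labeling_at -phi_u; case: phiL.
by rewrite complement_labeling_away //; have := node_label_lt xu; lia.
Qed.

Lemma complement_labeling_inj : injective mu.
Proof.
have [pos inj _ _ _] := phiL.
have away_lt x : x != u -> mu x < M.
  move=> xu; rewrite complement_labeling_away //.
  by have := pos x; have := node_label_lt xu; lia.
move=> x y; case: (eqVneq x u) => [->|xu]; case: (eqVneq y u) => [->|yu] //.
- by rewrite complement_labeling_at; have := away_lt _ yu; lia.
- by rewrite complement_labeling_at; have := away_lt _ xu; lia.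
rewrite !complement_labeling_away // => Hxy; apply: inj.
by have := node_label_lt xu; have := node_label_lt yu; lia.
Qed.

Lemma complement_edge_label_inj x y x' y' : e x y -> e x' y' ->
  absdiff (mu x) (mu y) = absdiff (mu x') (mu y') -> [set x; y] = [set x'; y'].
Proof.
have [_ inj einj ne _] := phiL => exy exy'.
have [[w wu [-> ->]]|[xu yu]] := edge_at_or_away mu exy;
  have [[w' wu' [-> ->]]|[xu' yu']] := edge_at_or_away mu exy';
  rewrite ?absdiff_complement_at ?absdiff_complement_away //.
- by move/inj ->.
- by move/ne; case.
- by move/esym/ne; case.
- exact: einj.
Qed.

Lemma complement_node_edge_label_neq z x y : e x y ->
  mu z <> absdiff (mu x) (mu y).
Proof.
have [_ _ einj ne _] := phiL => exy.
have [[w wu [_ ->]]|[xu yu]] := edge_at_or_away mu exy.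
  rewrite absdiff_complement_at //; case: (eqVneq z u) => [->|zu].
    by rewrite complement_labeling_at; have := node_label_lt wu; lia.
  by rewrite -absdiff_label_at //; apply/nesym/ne/hub.
rewrite absdiff_complement_away //; case: (eqVneq z u) => [->|zu].
  by rewrite complement_labeling_at; have := absdiff_label_lt x y; lia.
rewrite -absdiff_label_at // => /(einj _ _ _ _ (hub zu) exy)/setP/(_ u).
by rewrite !inE eqxx ![u == _]eq_sym (negbTE xu) (negbTE yu).
Qed.

Lemma total_labeling_complement : total_labeling e mu.
Proof.
split.
- exact: complement_labeling_pos.
- exact: complement_labeling_inj.
- exact: complement_edge_label_inj.
- exact: complement_node_edge_label_neq.
- by move=> k; rewrite is_labelP; split=> /is_label_complement.
Qed.

End TotalLabeling.

Theorem corollary8p3 (T : finType) (e : rel T) (u : T) (phi : T -> nat) :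
  simple_graph e ->
  supergraceful e ->
  #|[set v | e u v]| = #|T| - 1 ->
  total_labeling e phi ->
  phi u = #|T| + #|edges e| ->
  exists mu : T -> nat, total_labeling e mu /\ (exists x, mu x = 1).
Proof.
move=> [e_irr _] _ deg_u phiL phi_u.
have hub := adjacent_all_of_card e_irr deg_u.
case: (pickP (fun z => phi z == 1)) => [z /eqP phi_z|no1].
  by exists phi; split; last exists z.
have [v phi_v] := pred_top_node_label phiL u (fun z => negbT (no1 z)).
have M_pos : 0 < #|T| + #|edges e| by rewrite -phi_u; case: phiL.
have vu : v != u by apply/eqP => vu; move: phi_v; rewrite vu phi_u; lia.
exists (complement_labeling e phi u); split.
  exact: total_labeling_complement.
by exists v; rewrite complement_labeling_away // phi_v; lia.
Qed.
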